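(* Let $G$ be a group with finite generating set $T$ (with $T=T^{-1}$, $e\notin T$). Then there exist a group $H$ with a finite generating set $S$ (symmetric, $e\notin S$) and a homomorphism $\phi\colon G\to H$ such that (1) $\phi$ is an isometric embedding with respect to the word metrics of $(G,T)$ and $(H,S)$; (2) $\kappa(\phi(g))<0$ for all $g\in G\smallsetminus\{e\}$. In fact, $\kappa(h)<0$ for all $h\in H\smallsetminus\{e\}$ (curvature with respect to $S$).
   Context: For a group with finite generating set $S$ ($S=S^{-1}$, $e\notin S$), $|x|$ is word length, $\mathrm{Av}(g)=\frac{1}{|S|}\sum_{a\in S}|a^{-1}ga|$, and for $g\neq e$ the curvature is $\kappa(g)=\frac{|g|-\mathrm{Av}(g)}{|g|}$. *)

From Stdlib Require Import Reals List ClassicalEpsilon.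
Import ListNotations.
Open Scope R_scope.

Record group := Group {
  gcar :> Type;
  gmul : gcar -> gcar -> gcar;
  gone : gcar;
  ginv : gcar -> gcar;
  gassoc : forall x y z, gmul x (gmul y z) = gmul (gmul x y) z;
  gid_l : forall x, gmul gone x = x;
  ginv_l : forall x, gmul (ginv x) x = gone
}.

Arguments gmul {g}.
Arguments gone {g}.
Arguments ginv {g}.

Definition gprod {G : group} (l : list G) : G := fold_right gmul gone l.

(* S is a finite generating set: listed without repetition, symmetric,
   not containing the identity, and generating G as a monoid
   (equivalently as a group, by symmetry). *)
Definition is_fin_sym_gen_set (G : group) (S : list G) : Prop :=
  NoDup S /\
  (forall a, In a S -> In (ginv a) S) /\
  ~ In (@gone G) S /\
  (forall x : G, exists l : list G, incl l S /\ gprod l = x).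

Definition is_word_length (G : group) (S : list G) (x : G) (n : nat) : Prop :=
  (exists l, incl l S /\ gprod l = x /\ length l = n) /\
  (forall l, incl l S -> gprod l = x -> (n <= length l)%nat).

(* word length |x|_S (meaningful when S generates G) *)
Definition word_length (G : group) (S : list G) (x : G) : nat :=
  epsilon (inhabits 0%nat) (fun n => is_word_length G S x n).

Definition word_dist (G : group) (S : list G) (x y : G) : nat :=
  word_length G S (gmul (ginv x) y).

Definition Av (G : group) (S : list G) (g : G) : R :=
  / INR (length S) *
  fold_right Rplus 0
    (map (fun a => INR (word_length G S (gmul (ginv a) (gmul g a)))) S).

Definition curvature (G : group) (S : list G) (g : G) : R :=
  (INR (word_length G S g) - Av G S g) / INR (word_length G S g).

Definition is_hom (G H : group) (phi : G -> H) : Prop :=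
  forall x y : G, phi (gmul x y) = gmul (phi x) (phi y).

(* H is the free product of G with n = |T| + 5 copies of Z/2, generated by T
   and the involutions t_0, ..., t_(n-1).  Every element of H has a unique
   normal form g0 t_i1 g1 ... t_ik gk, of word length k + sum_j |g_j|_T, so G
   embeds isometrically.  For h <> 1, conjugating by a generator shortens h by
   at most 2, whereas conjugating by t_i lengthens it by exactly 2 unless i is
   the first or last t-index of h.  Summed over the |T| + n generators, the
   lengths of the conjugates of h exceed (|T| + n) |h| by at least
   2 (n - 2) - 2 |T| - 4 > 0, so Av(h) > |h|. *)

From Stdlib Require Import Reals List Lia Lra Arith ClassicalEpsilon ProofIrrelevance Wf_nat.
Import ListNotations.

Local Open Scope nat_scope.

Section GroupFacts.
Variable K : group.
Implicit Types x y : K.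

Lemma gmul_ginv_r x : gmul x (ginv x) = gone.
Proof.
  rewrite <- (gid_l K (gmul x (ginv x))), <- (ginv_l K (ginv x)) at 1.
  rewrite <- gassoc, (gassoc K (ginv x) x (ginv x)), ginv_l, gid_l.
  apply ginv_l.
Qed.

Lemma gmul_one_r x : gmul x gone = x.
Proof. rewrite <- (ginv_l K x), gassoc, gmul_ginv_r. apply gid_l. Qed.

Lemma ginv_unique x y : gmul y x = gone -> ginv x = y.
Proof.
  intro E. rewrite <- (gid_l K (ginv x)), <- E, <- gassoc, gmul_ginv_r.
  apply gmul_one_r.
Qed.

Lemma gprod_app (l1 l2 : list K) : gprod (l1 ++ l2) = gmul (gprod l1) (gprod l2).
Proof.
  induction l1 as [|a l1 IH]; simpl.
  - now rewrite gid_l.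
  - unfold gprod in *; simpl. rewrite IH. apply gassoc.
Qed.

End GroupFacts.

Section Homomorphisms.
Variables (G H : group) (phi : G -> H).
Hypothesis phi_hom : is_hom G H phi.

Lemma hom_one : phi gone = gone.
Proof.
  transitivity (gmul (ginv (phi gone)) (gmul (phi gone) (phi gone))).
  - now rewrite gassoc, ginv_l, gid_l.
  - rewrite <- phi_hom, gid_l. apply ginv_l.
Qed.

Lemma hom_inv x : phi (ginv x) = ginv (phi x).
Proof. symmetry. apply ginv_unique. rewrite <- phi_hom, ginv_l. apply hom_one. Qed.

Lemma gprod_map (l : list G) : gprod (map phi l) = phi (gprod l).
Proof.
  induction l as [|a l IH].
  - symmetry. apply hom_one.
  - change (gmul (phi a) (gprod (map phi l)) = phi (gmul a (gprod l))).
    now rewrite IH, phi_hom.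
Qed.

End Homomorphisms.

Section WordLength.
Variables (K : group) (S : list K).
Hypothesis S_gen : forall x : K, exists l, incl l S /\ gprod l = x.

Lemma word_length_exists x : exists m, is_word_length K S x m.
Proof.
  destruct (dec_inh_nat_subset_has_unique_least_element
     (fun m => exists l, incl l S /\ gprod l = x /\ length l = m)) as [m [[Hm Hmin] _]].
  - intro m; apply classic.
  - destruct (S_gen x) as [l [Hl Hx]]. exists (length l), l; auto.
  - exists m. split; auto. intros l Hl Hx. apply Hmin. exists l; auto.
Qed.

Lemma word_length_spec x : is_word_length K S x (word_length K S x).
Proof. unfold word_length. apply epsilon_spec, word_length_exists. Qed.

Lemma word_length_unique x m : is_word_length K S x m -> word_length K S x = m.
Proof.
  intros [[l [Hl [Hx Hm]]] Hmin].
  destruct (word_length_spec x) as [[l' [Hl' [Hx' Hm']]] Hmin'].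
  specialize (Hmin l' Hl' Hx'). specialize (Hmin' l Hl Hx). lia.
Qed.

Lemma word_length_le x l : incl l S -> gprod l = x -> word_length K S x <= length l.
Proof. apply word_length_spec. Qed.

Lemma word_length_word x :
  exists l, incl l S /\ gprod l = x /\ length l = word_length K S x.
Proof. apply word_length_spec. Qed.

Lemma word_length_one : word_length K S gone = 0.
Proof.
  apply word_length_unique. split.
  - exists []. repeat split. intros a [].
  - intros; lia.
Qed.

Lemma word_length_eq0 x : word_length K S x = 0 -> x = gone.
Proof.
  intro E. destruct (word_length_word x) as [[|a l] [_ [<- Hl]]]; [reflexivity|].
  rewrite E in Hl. discriminate.
Qed.

Lemma word_length_mul x y :
  word_length K S (gmul x y) <= word_length K S x + word_length K S y.
Proof.
  destruct (word_length_word x) as [lx [Sx [<- <-]]].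
  destruct (word_length_word y) as [ly [Sy [<- <-]]].
  rewrite <- length_app, <- gprod_app. apply word_length_le; [|reflexivity].
  intros a Ha; apply in_app_or in Ha; destruct Ha; auto.
Qed.

Lemma word_length_gen s : In s S -> word_length K S s <= 1.
Proof.
  intro Hs. apply (word_length_le s [s]).
  - intros a [<-|[]]; auto.
  - apply gmul_one_r.
Qed.

Lemma word_length_conj_ge h s : In s S -> In (ginv s) S ->
  word_length K S h <= word_length K S (gmul (ginv s) (gmul h s)) + 2.
Proof.
  intros Hs Hs'.
  assert (Eh : h = gmul s (gmul (gmul (ginv s) (gmul h s)) (ginv s))).
  { now rewrite <- !gassoc, gmul_ginv_r, gmul_one_r, gassoc, gmul_ginv_r, gid_l. }
  rewrite Eh at 1.
  pose proof (word_length_mul s (gmul (gmul (ginv s) (gmul h s)) (ginv s))).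
  pose proof (word_length_mul (gmul (ginv s) (gmul h s)) (ginv s)).
  pose proof (word_length_gen s Hs). pose proof (word_length_gen _ Hs'). lia.
Qed.

End WordLength.

Lemma hom_word_dist (G H : group) (T : list G) (S : list H) (phi : G -> H) :
  is_hom G H phi ->
  (forall g, word_length H S (phi g) = word_length G T g) ->
  forall x y, word_dist H S (phi x) (phi y) = word_dist G T x y.
Proof.
  intros Hphi Hlen x y. unfold word_dist.
  now rewrite <- hom_inv, <- Hphi, Hlen by exact Hphi.
Qed.

Section FreeProduct.
Variables (G : group) (n : nat).

(* [(g0, [(i1, g1); ...; (ik, gk)])] stands for g0 t_i1 g1 ... t_ik gk; the
   tail is reduced when every i_j < n and no factor t_i 1 t_i occurs. *)
Definition nform : Type := (G * list (nat * G))%type.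

Fixpoint reduced (r : list (nat * G)) : Prop :=
  match r with
  | [] => True
  | (i, g) :: r' => i < n /\ reduced r' /\
      (g = gone -> match r' with (j, _) :: _ => i <> j | [] => True end)
  end.

Definition lmulG (g : G) (s : nform) : nform := (gmul g (fst s), snd s).

Definition lmulT (i : nat) (s : nform) : nform :=
  if lt_dec i n then
    match s with
    | (g0, (j, g1) :: r) =>
        if excluded_middle_informative (g0 = gone /\ i = j) then (g1, r)
        else (gone, (i, g0) :: (j, g1) :: r)
    | (g0, []) => (gone, [(i, g0)])
    end
  else s.

Lemma lmulG_mul g g' s : lmulG g (lmulG g' s) = lmulG (gmul g g') s.
Proof. unfold lmulG; simpl. now rewrite gassoc. Qed.

Lemma lmulG_one s : lmulG gone s = s.
Proof. destruct s; unfold lmulG; simpl. now rewrite gid_l. Qed.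

Lemma lmulT_cons i g r : reduced ((i, g) :: r) -> lmulT i (g, r) = (gone, (i, g) :: r).
Proof.
  intros [Hi [_ Hc]]. unfold lmulT. destruct (lt_dec i n) as [_|]; [|contradiction].
  destruct r as [|[j g1] r]; [reflexivity|].
  destruct excluded_middle_informative as [[E1 E2]|_]; [|reflexivity].
  exfalso. exact (Hc E1 E2).
Qed.

Lemma lmulT_cancel i g r : i < n -> lmulT i (gone, (i, g) :: r) = (g, r).
Proof.
  intro Hi. unfold lmulT. destruct (lt_dec i n) as [_|]; [|contradiction].
  destruct excluded_middle_informative as [_|E]; [reflexivity|].
  exfalso. auto.
Qed.

Lemma reduced_lmulT i s : reduced (snd s) -> reduced (snd (lmulT i s)).
Proof.
  destruct s as [g0 r]; unfold lmulT; simpl; intro Hr.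
  destruct (lt_dec i n) as [Hi|]; auto.
  destruct r as [|[j g1] r']; simpl; [auto|].
  destruct excluded_middle_informative as [_|E]; simpl; [apply Hr|].
  split; [|split]; auto.
Qed.

Lemma lmulT_involutive i s : reduced (snd s) -> lmulT i (lmulT i s) = s.
Proof.
  destruct s as [g0 r]; simpl; intro Hr.
  unfold lmulT at 2. destruct (lt_dec i n) as [Hi|Hi].
  - destruct r as [|[j g1] r']; [now apply lmulT_cancel|].
    destruct excluded_middle_informative as [[-> <-]|_].
    + apply lmulT_cons, Hr.
    + now apply lmulT_cancel.
  - unfold lmulT. now destruct (lt_dec i n).
Qed.

Inductive letter := LG (g : G) | LT (i : nat).

Definition act (l : letter) : nform -> nform :=
  match l with LG g => lmulG g | LT i => lmulT i end.

Definition act_word (w : list letter) (s : nform) : nform := fold_right act s w.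

Definition letter_inv (l : letter) : letter :=
  match l with LG g => LG (ginv g) | LT i => LT i end.

Definition word_inv (w : list letter) : list letter := rev (map letter_inv w).

Definition spell (s : nform) : list letter :=
  LG (fst s) :: flat_map (fun b => [LT (fst b); LG (snd b)]) (snd s).

(* van der Waerden's trick: s acts on z letter by letter; associativity comes
   from this left action commuting with right multiplication (act_nf_mul). *)
Definition nf_mul (s z : nform) : nform := act_word (spell s) z.

Lemma reduced_act_word w s : reduced (snd s) -> reduced (snd (act_word w s)).
Proof.
  induction w as [|[g|i] w IH]; simpl; auto.
  intro Hs. apply reduced_lmulT, IH, Hs.
Qed.

Lemma act_letter_inv l s : reduced (snd s) -> act (letter_inv l) (act l s) = s.
Proof.
  destruct l as [g|i]; simpl; intro Hs.
  - now rewrite lmulG_mul, ginv_l, lmulG_one.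
  - now apply lmulT_involutive.
Qed.

Lemma act_word_app w1 w2 s : act_word (w1 ++ w2) s = act_word w1 (act_word w2 s).
Proof. apply fold_right_app. Qed.

Lemma act_word_inv w s : reduced (snd s) -> act_word (word_inv w) (act_word w s) = s.
Proof.
  induction w as [|l w IH]; simpl; auto. intro Hs.
  unfold word_inv; simpl. rewrite act_word_app; simpl.
  rewrite act_letter_inv by now apply reduced_act_word.
  now apply IH.
Qed.

Lemma act_nf_mul l s z : reduced (snd z) -> act l (nf_mul s z) = nf_mul (act l s) z.
Proof.
  intro Hz. destruct s as [g0 r]. destruct l as [g|i]; simpl.
  - apply lmulG_mul.
  - unfold lmulT at 2. destruct (lt_dec i n) as [Hi|].
    + destruct r as [|[j g1] r]; [symmetry; apply lmulG_one|].
      destruct excluded_middle_informative as [[-> <-]|_]; [|symmetry; apply lmulG_one].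
      unfold nf_mul, spell; simpl. rewrite lmulG_one.
      apply lmulT_involutive, (reduced_act_word (LG g1 :: _)), Hz.
    + unfold lmulT. now destruct (lt_dec i n).
Qed.

Lemma act_word_nf_mul w s z :
  reduced (snd z) -> act_word w (nf_mul s z) = nf_mul (act_word w s) z.
Proof.
  intro Hz. induction w as [|l w IH]; simpl; auto.
  rewrite IH. now apply act_nf_mul.
Qed.

Lemma nf_mul_concat g0 r z : reduced (r ++ z) -> nf_mul (g0, r) (gone, z) = (g0, r ++ z).
Proof.
  revert g0. induction r as [|[i g1] r IH]; intros g0 Hr.
  - change ((gmul g0 gone, z) = (g0, z)). now rewrite gmul_one_r.
  - destruct Hr as [Hi [Hr Hc]].
    change (lmulG g0 (lmulT i (nf_mul (g1, r) (gone, z))) = (g0, (i, g1) :: r ++ z)).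
    rewrite IH, lmulT_cons by (simpl; auto; repeat split; auto).
    unfold lmulG; simpl. now rewrite gmul_one_r.
Qed.

Lemma nf_mul_one_r s : reduced (snd s) -> nf_mul s (gone, []) = s.
Proof.
  destruct s as [g0 r]; simpl; intro Hr.
  rewrite nf_mul_concat; rewrite app_nil_r; auto.
Qed.

Lemma nf_mul_one_l z : nf_mul (gone, []) z = z.
Proof. apply lmulG_one. Qed.

Definition elem : Type := {s : nform | reduced (snd s)}.

Lemma elem_eq (x y : elem) : proj1_sig x = proj1_sig y -> x = y.
Proof.
  destruct x as [x Hx], y as [y Hy]; simpl; intros ->.
  f_equal. apply proof_irrelevance.
Qed.

Definition elem_mul (x y : elem) : elem :=
  exist _ (nf_mul (proj1_sig x) (proj1_sig y)) (reduced_act_word _ _ (proj2_sig y)).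

Definition elem_one : elem := exist _ (gone, []) I.

Definition elem_inv (x : elem) : elem :=
  exist _ (act_word (word_inv (spell (proj1_sig x))) (gone, []))
    (reduced_act_word _ (gone, []) I).

Lemma elem_mul_assoc x y z : elem_mul x (elem_mul y z) = elem_mul (elem_mul x y) z.
Proof. apply elem_eq; simpl. apply act_word_nf_mul, proj2_sig. Qed.

Lemma elem_mul_one_l x : elem_mul elem_one x = x.
Proof. apply elem_eq, nf_mul_one_l. Qed.

Lemma elem_mul_inv_l x : elem_mul (elem_inv x) x = elem_one.
Proof.
  apply elem_eq; simpl.
  rewrite <- act_word_nf_mul, nf_mul_one_l by apply proj2_sig.
  rewrite <- (nf_mul_one_r (proj1_sig x) (proj2_sig x)) at 2.
  now apply act_word_inv.
Qed.

Definition freeC2 : group :=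
  Group elem elem_mul elem_one elem_inv elem_mul_assoc elem_mul_one_l elem_mul_inv_l.

End FreeProduct.

Section FreeProductWordLength.
Variables (G : group) (T : list G) (n : nat).
Hypothesis T_gen : forall x : G, exists l, incl l T /\ gprod l = x.

Definition embG (g : G) : freeC2 G n := exist _ (g, []) I.

(* For i >= n, [tee i] is a junk value, the identity. *)
Definition tee (i : nat) : freeC2 G n :=
  match lt_dec i n with
  | left Hi => exist _ (gone, [(i, gone)]) (conj Hi (conj I (fun _ => I)))
  | right _ => gone
  end.

Definition gens : list (freeC2 G n) := map embG T ++ map tee (seq 0 n).

Definition nf_length (s : nform G) : nat :=
  word_length G T (fst s) + list_sum (map (fun b => S (word_length G T (snd b))) (snd s)).

Lemma embG_hom : is_hom G (freeC2 G n) embG.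
Proof. intros x y. now apply elem_eq. Qed.

Lemma embG_mul_val a (y : freeC2 G n) : proj1_sig (gmul (embG a) y) = lmulG G a (proj1_sig y).
Proof. reflexivity. Qed.

Lemma tee_val i : i < n -> proj1_sig (tee i) = (gone, [(i, gone)]).
Proof. intro Hi. unfold tee. now destruct (lt_dec i n). Qed.

Lemma tee_mul_val i (y : freeC2 G n) :
  i < n -> proj1_sig (gmul (tee i) y) = lmulT G n i (proj1_sig y).
Proof.
  intro Hi. unfold tee. destruct (lt_dec i n); [|contradiction].
  change (lmulG G gone (lmulT G n i (lmulG G gone (proj1_sig y))) = lmulT G n i (proj1_sig y)).
  now rewrite !lmulG_one.
Qed.

Lemma in_gens s : In s gens ->
  (exists a, In a T /\ s = embG a) \/ (exists i, i < n /\ s = tee i).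
Proof.
  intro Hs. apply in_app_or in Hs as [Hs|Hs]; apply in_map_iff in Hs as [x [<- Hx]].
  - left. eauto.
  - right. apply in_seq in Hx. exists x. split; [lia|reflexivity].
Qed.

Lemma nf_length_mul_gen s (y : freeC2 G n) :
  In s gens -> nf_length (proj1_sig (gmul s y)) <= S (nf_length (proj1_sig y)).
Proof.
  destruct y as [[y0 r] Hy].
  intros [[a [Ha ->]]|[i [Hi ->]]]%in_gens.
  - rewrite embG_mul_val. unfold nf_length; simpl.
    pose proof (word_length_mul G T T_gen a y0). pose proof (word_length_gen G T T_gen a Ha).
    lia.
  - rewrite tee_mul_val by exact Hi. unfold lmulT; simpl.
    destruct (lt_dec i n) as [_|]; [|contradiction].
    unfold nf_length; destruct r as [|[j g1] r];
      [|destruct excluded_middle_informative as [[-> ->]|_]];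
      simpl; rewrite (word_length_one G T T_gen); lia.
Qed.

Lemma nf_length_gprod_le l : incl l gens -> nf_length (proj1_sig (gprod l)) <= length l.
Proof.
  induction l as [|s l IH]; intro Hl.
  - unfold nf_length; simpl. now rewrite (word_length_one G T T_gen).
  - eapply Nat.le_trans; [apply (nf_length_mul_gen s (gprod l)), Hl; now left|].
    simpl. apply le_n_S, IH. intros a Ha. apply Hl. now right.
Qed.

Lemma embG_word g0 : exists l, incl l gens /\ gprod l = embG g0 /\ length l = word_length G T g0.
Proof.
  destruct (word_length_word G T T_gen g0) as [w [Hw [<- <-]]].
  exists (map embG w). split; [|split].
  - intros s Hs. apply in_map_iff in Hs as [a [<- Ha]]. apply in_or_app. left. apply in_map, Hw, Ha.
  - apply gprod_map, embG_hom.
  - apply length_map.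
Qed.

Lemma nf_word r : reduced G n r -> forall g0,
  exists l, incl l gens /\ proj1_sig (gprod l) = (g0, r) /\ length l = nf_length (g0, r).
Proof.
  induction r as [|[i g1] r IH]; intros Hr g0;
    destruct (embG_word g0) as [w [Hw [Ew Lw]]].
  - exists w. split; [exact Hw|split; [now rewrite Ew|]].
    unfold nf_length; simpl. rewrite Nat.add_0_r. exact Lw.
  - destruct (IH (proj1 (proj2 Hr)) g1) as [l [Hl [El Ll]]].
    exists (w ++ tee i :: l). split; [|split].
    + intros s Hs. apply in_app_or in Hs as [Hs|[<-|Hs]]; [now apply Hw| |now apply Hl].
      apply in_or_app. right. apply in_map, in_seq. simpl in Hr. lia.
    + rewrite gprod_app, Ew, embG_mul_val.
      change (lmulG G g0 (proj1_sig (gmul (tee i) (gprod l))) = (g0, (i, g1) :: r)).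
      rewrite tee_mul_val, El, lmulT_cons by (try exact Hr; apply Hr).
      unfold lmulG; simpl. now rewrite gmul_one_r.
    + rewrite length_app, Lw. simpl length. unfold nf_length in *; simpl in *. lia.
Qed.

Lemma gens_generate x : exists l, incl l gens /\ gprod l = x.
Proof.
  destruct x as [[g0 r] Hx]. destruct (nf_word r Hx g0) as [l [Hl [El _]]].
  exists l. split; auto. now apply elem_eq.
Qed.

Lemma word_length_freeC2 x : word_length (freeC2 G n) gens x = nf_length (proj1_sig x).
Proof.
  apply word_length_unique; [apply gens_generate|]. split.
  - destruct x as [[g0 r] Hx]. destruct (nf_word r Hx g0) as [l [Hl [El Ll]]].
    exists l. repeat split; auto. now apply elem_eq.
  - intros l Hl <-. now apply nf_length_gprod_le.
Qed.

Lemma word_length_embG g : word_length (freeC2 G n) gens (embG g) = word_length G T g.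
Proof. rewrite word_length_freeC2. unfold nf_length; simpl. lia. Qed.

End FreeProductWordLength.

Lemma list_sum_lower_bound {X} (l : list X) (f : X -> nat) c k :
  (forall x, In x l -> c <= f x + k) -> c * length l <= list_sum (map f l) + k * length l.
Proof.
  induction l as [|a l IH]; intro Hf; simpl; [lia|].
  pose proof (Hf a (or_introl eq_refl)).
  pose proof (IH (fun x Hx => Hf x (or_intror Hx))). lia.
Qed.

Lemma list_sum_lower_bound_but_two {X} (eq_dec : forall x y : X, {x = y} + {x <> y})
    (l : list X) (f : X -> nat) c k p q :
  NoDup l ->
  (forall x, In x l -> c <= f x + k) ->
  (forall x, In x l -> x <> p -> x <> q -> c <= f x) ->
  c * length l <= list_sum (map f l) + 2 * k.
Proof.
  intros Hl Hk Hpq.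
  assert (Hcount : c * length l <=
    list_sum (map f l) + k * count_occ eq_dec l p + k * count_occ eq_dec l q).
  { clear Hl. induction l as [|a l IH]; simpl; [lia|].
    pose proof (Hk a (or_introl eq_refl)) as Ha.
    pose proof (IH (fun x Hx => Hk x (or_intror Hx)) (fun x Hx => Hpq x (or_intror Hx))).
    destruct (eq_dec a p) as [|Hp], (eq_dec a q) as [|Hq]; [nia..|].
    pose proof (Hpq a (or_introl eq_refl) Hp Hq). nia. }
  pose proof (proj1 (NoDup_count_occ eq_dec l) Hl p).
  pose proof (proj1 (NoDup_count_occ eq_dec l) Hl q). nia.
Qed.

Lemma curvature_neg_of_conj_sum (K : group) (S : list K) (h : K) :
  0 < word_length K S h ->
  length S * word_length K S h <
    list_sum (map (fun a => word_length K S (gmul (ginv a) (gmul h a))) S) ->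
  (curvature K S h < 0)%R.
Proof.
  intros Hpos Hsum.
  set (c := word_length K S h) in *.
  set (sum := list_sum _) in Hsum.
  assert (HS : 0 < length S) by (destruct S; simpl in *; lia).
  assert (Esum : forall (l : list K) (g : K -> nat),
    fold_right Rplus 0%R (map (fun a => INR (g a)) l) = INR (list_sum (map g l))).
  { induction l as [|a l IH]; intro g; simpl; [reflexivity|]. now rewrite IH, plus_INR. }
  unfold curvature, Av. fold c. rewrite Esum. fold sum.
  apply lt_INR in Hsum, HS, Hpos. rewrite mult_INR in Hsum. simpl in HS, Hpos.
  apply Rdiv_neg_pos; [|exact Hpos].
  apply Rlt_minus.
  apply (Rmult_lt_reg_l (INR (length S))); [exact HS|].
  rewrite <- Rmult_assoc, Rinv_r, Rmult_1_l by lra. exact Hsum.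
Qed.

Section Curvature.
Variables (G : group) (T : list G) (n : nat).
Hypothesis T_fsg : is_fin_sym_gen_set G T.

Let T_gen : forall x : G, exists l, incl l T /\ gprod l = x := proj2 (proj2 (proj2 T_fsg)).

Notation H := (freeC2 G n).
Notation S := (gens G T n).

Lemma embG_inj a b : embG G n a = embG G n b -> a = b.
Proof. intro E. exact (f_equal (fun x => fst (proj1_sig x)) E). Qed.

Lemma tee_inv i : i < n -> ginv (tee G n i) = tee G n i.
Proof.
  intro Hi. apply ginv_unique, elem_eq.
  rewrite tee_mul_val, tee_val by exact Hi. now apply lmulT_cancel.
Qed.

Lemma gens_fin_sym_gen_set : is_fin_sym_gen_set H S.
Proof.
  pose proof T_fsg as [T_nodup [T_sym [T_one _]]].
  assert (tee_ne_embG : forall i a, i < n -> tee G n i <> embG G n a).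
  { intros i a Hi E. apply (f_equal (@proj1_sig _ _)) in E. rewrite tee_val in E by exact Hi.
    discriminate. }
  split; [|split; [|split]].
  - apply NoDup_app.
    + apply NoDup_map_NoDup_ForallPairs; [|exact T_nodup]. intros a b _ _. apply embG_inj.
    + apply NoDup_map_NoDup_ForallPairs; [|apply seq_NoDup].
      intros i j Hi Hj E. apply in_seq in Hi, Hj.
      apply (f_equal (@proj1_sig _ _)) in E. rewrite !tee_val in E by lia.
      now injection E.
    + intros s Hs Hs'. apply in_map_iff in Hs as [a [<- _]], Hs' as [i [E Hi]].
      apply in_seq in Hi. apply (tee_ne_embG i a); [lia|exact E].
  - intros s [[a [Ha ->]]|[i [Hi ->]]]%in_gens; apply in_or_app.
    + left. rewrite <- hom_inv by apply embG_hom. now apply in_map, T_sym.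
    + right. rewrite tee_inv by exact Hi. apply in_map, in_seq. lia.
  - intros [[a [Ha E]]|[i [Hi E]]]%in_gens.
    + apply T_one. now rewrite <- (embG_inj a gone (eq_sym E)).
    + apply (f_equal (@proj1_sig _ _)) in E. rewrite tee_val in E by exact Hi. discriminate.
  - apply gens_generate, T_gen.
Qed.

Lemma reduced_snoc r i : reduced G n r -> i < n -> i <> fst (last r (n, gone)) ->
  reduced G n (r ++ [(i, gone)]).
Proof.
  induction r as [|[j g] r IH]; intros Hr Hi Hlast; simpl; [repeat split; auto|].
  destruct Hr as [Hj [Hr Hc]]. split; [exact Hj|split].
  - apply IH; auto. destruct r; simpl in *; [lia|exact Hlast].
  - intro Hg. specialize (Hc Hg). destruct r as [|[k g2] r]; simpl in *; auto.
Qed.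

(* Conjugating [h = g0 t_i1 g1 ... t_ik gk] by [t_i] gives the normal form
   [t_i g0 t_i1 ... gk t_i] unless [t_i] cancels against [t_i1] or [t_ik]. *)
Lemma word_length_conj_tee (h : H) i :
  h <> gone -> i < n ->
  i <> fst (hd (n, gone) (snd (proj1_sig h))) ->
  i <> fst (last (snd (proj1_sig h)) (n, gone)) ->
  word_length H S (gmul (ginv (tee G n i)) (gmul h (tee G n i))) = word_length H S h + 2.
Proof.
  intros Hne Hi Hfirst Hlast.
  rewrite tee_inv, !word_length_freeC2, tee_mul_val by assumption.
  change (proj1_sig (gmul h (tee G n i)))
    with (nf_mul G n (proj1_sig h) (proj1_sig (tee G n i))).
  destruct h as [[g0 r] Hr]; cbn [proj1_sig snd] in *.
  rewrite tee_val, nf_mul_concat by (try apply reduced_snoc; assumption).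
  rewrite lmulT_cons.
  - unfold nf_length; simpl. rewrite map_app, list_sum_app; simpl.
    rewrite (word_length_one G T T_gen). lia.
  - split; [exact Hi|split; [now apply reduced_snoc|]].
    destruct r as [|[j g1] r]; simpl; [|intros _; exact Hfirst].
    intros ->. exfalso. apply Hne. now apply elem_eq.
Qed.

Hypothesis n_large : length T + 4 < n.

Lemma conj_sum_gt (h : H) : h <> gone ->
  length S * word_length H S h <
    list_sum (map (fun s => word_length H S (gmul (ginv s) (gmul h s))) S).
Proof.
  intro Hne.
  set (f := fun s => word_length H S (gmul (ginv s) (gmul h s))).
  set (c := word_length H S h).
  destruct gens_fin_sym_gen_set as [_ [S_sym [_ S_gen]]].
  assert (Hconj : forall s, In s S -> c <= f s + 2).
  { intros s Hs. apply word_length_conj_ge; auto. }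
  assert (Htee : forall i, In i (seq 0 n) ->
      i <> fst (hd (n, gone) (snd (proj1_sig h))) ->
      i <> fst (last (snd (proj1_sig h)) (n, gone)) -> c + 2 <= f (tee G n i)).
  { intros i Hi Hfirst Hlast. apply in_seq in Hi. unfold f, c.
    rewrite word_length_conj_tee by (auto; lia). lia. }
  unfold gens. rewrite map_app, list_sum_app, length_app, !map_map, !length_map, length_seq.
  pose proof (list_sum_lower_bound T (fun a => f (embG G n a)) c 2
    (fun a Ha => Hconj _ (in_or_app _ _ _ (or_introl (in_map _ _ _ Ha))))) as ST.
  assert (Htee_conj : forall i, In i (seq 0 n) -> c + 2 <= f (tee G n i) + 4).
  { intros i Hi. pose proof (Hconj _ (in_or_app _ _ _ (or_intror (in_map _ _ _ Hi)))). lia. }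
  pose proof (list_sum_lower_bound_but_two Nat.eq_dec (seq 0 n) (fun i => f (tee G n i))
    (c + 2) 4 _ _ (seq_NoDup n 0) Htee_conj Htee) as Sn.
  rewrite length_seq in Sn. nia.
Qed.

Lemma curvature_freeC2_neg (h : H) : h <> gone -> (curvature H S h < 0)%R.
Proof.
  intro Hne. apply curvature_neg_of_conj_sum; [|now apply conj_sum_gt].
  destruct (word_length H S h) eqn:E; [|lia].
  exfalso. apply Hne. apply (word_length_eq0 H S); [apply gens_fin_sym_gen_set|exact E].
Qed.

End Curvature.

Local Open Scope R_scope.

Theorem mainTheorem12 (G : group) (T : list G) :
  is_fin_sym_gen_set G T ->
  exists (H : group) (S : list H) (phi : G -> H),
    is_fin_sym_gen_set H S /\
    is_hom G H phi /\
    (forall x y : G, word_dist H S (phi x) (phi y) = word_dist G T x y) /\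
    (forall g : G, g <> gone -> curvature H S (phi g) < 0) /\
    (forall h : H, h <> gone -> curvature H S h < 0).
Proof.
  intro HT.
  set (n := (length T + 5)%nat).
  assert (n_large : (length T + 4 < n)%nat) by (unfold n; lia).
  exists (freeC2 G n), (gens G T n), (embG G n).
  split; [|split; [|split; [|split]]].
  - now apply gens_fin_sym_gen_set.
  - apply embG_hom.
  - apply hom_word_dist; [apply embG_hom|]. apply word_length_embG, HT.
  - intros g Hg. apply curvature_freeC2_neg; auto.
    intro E. apply Hg, (embG_inj G n g gone E).
  - intros h Hh. now apply curvature_freeC2_neg.
Qed.
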